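(* Let $X,Y,P$ be Banach spaces, $F:X\times P\rightrightarrows Y$ and $G:X\rightrightarrows Y$ set-valued maps and $(\overline{x},\overline{p},\overline{y})\in X\times P\times Y$ with $\overline{y}\in F(\overline{x},\overline{p})$ and $-\overline{y}\in G(\overline{x})$. Let $S:P\rightrightarrows X$, $S(p)=\{x\in X: 0\in F(x,p)+G(x)\}$. Suppose: (i) $(F,G)$ is locally sum-stable around $(\overline{x},\overline{p},\overline{y},-\overline{y})$; (ii) for every $p$ in a neighborhood of $\overline{p}$, $\operatorname{Gr}F(\cdot,p)$ is closed; (iii) $\operatorname{Gr}G$ is closed; (iv) $F$ is Lipschitz-like around $((\overline{x},\overline{p}),\overline{y})$; (v) $G$ is metrically regular around $(\overline{x},-\overline{y})$; (vi) $G$ is inner semicontinuous at $(\overline{x},-\overline{y})$; (vii) $\widehat{\operatorname{lip}}_xF((\overline{x},\overline{p}),\overline{y})\cdot\operatorname{reg}G(\overline{x},-\overline{y})<1$. Then $S$ is Lipschitz-like around $(\overline{p},\overline{x})$ and \[ \operatorname{lip}S(\overline{p},\overline{x})\le\frac{\operatorname{reg}G(\overline{x},-\overline{y})\cdot\widehat{\operatorname{lip}}_pF((\overline{x},\overline{p}),\overline{y})}{1-\widehat{\operatorname{lip}}_xF((\overline{x},\overline{p}),\overline{y})\cdot\operatorname{reg}G(\overline{x},-\overline{y})}. \]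
   Context: $B$ open balls, $\mathbb{D}_Y$ closed unit ball, $d(x,A)=\inf_{a\in A}\|x-a\|$, $d(x,\emptyset)=\infty$; $X\times P$ carries the sum norm. Write $F_p=F(\cdot,p)$. $(F,G)$ is locally sum-stable around $(\overline{x},\overline{p},\overline{y},\overline{z})$ (where $\overline{y}\in F(\overline{x},\overline{p})$, $\overline{z}\in G(\overline{x})$) if for every $\varepsilon>0$ there is $\delta>0$ such that for every $(x,p)\in B(\overline{x},\delta)\times B(\overline{p},\delta)$ and every $w\in(F_p+G)(x)\cap B(\overline{y}+\overline{z},\delta)$ there exist $y\in F_p(x)\cap B(\overline{y},\varepsilon)$ and $z\in G(x)\cap B(\overline{z},\varepsilon)$ with $w=y+z$. A multifunction $T:A\rightrightarrows B$ is Lipschitz-like around $(\overline{a},\overline{b})\in\operatorname{Gr}T$ with constant $L>0$ if there are neighborhoods $U$ of $\overline{a}$, $V$ of $\overline{b}$ with $T(a)\cap V\subset T(u)+L\|a-u\|\mathbb{D}_B$ for all $a,u\in U$ ($\operatorname{lip}T(\overline{a},\overline{b})$ the infimum of such $L$); $T$ is metrically regular around $(\overline{a},\overline{b})$ with constant $L$ if there are neighborhoods $U,V$ with $d(a,T^{-1}(b))\le L\,d(b,T(a))$ for all $(a,b)\in U\times V$ ($\operatorname{reg}T(\overline{a},\overline{b})$ the infimum of such $L$); $T$ is inner semicontinuous at $(\overline{a},\overline{b})$ if for every open $D\ni\overline{b}$ there is a neighborhood $U$ of $\overline{a}$ with $T(a)\cap D\ne\emptyset$ for all $a\in U$. $\widehat{\operatorname{lip}}_xF((\overline{x},\overline{p}),\overline{y})$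 is the infimum of $L>0$ for which there are neighborhoods $U$ of $\overline{x}$, $V$ of $\overline{p}$, $W$ of $\overline{y}$ with $F(x,p)\cap W\subset F(u,p)+L\|x-u\|\mathbb{D}_Y$ for all $x,u\in U$, $p\in V$; $\widehat{\operatorname{lip}}_pF((\overline{x},\overline{p}),\overline{y})$ is the infimum of $L>0$ for which there are such neighborhoods with $F(x,p)\cap W\subset F(x,q)+L\|p-q\|\mathbb{D}_Y$ for all $x\in U$, $p,q\in V$. *)

From HB Require Import structures.
From mathcomp Require Import all_boot all_order all_algebra.
From mathcomp Require Import all_classical all_reals all_analysis.
Set Implicit Arguments. Unset Strict Implicit. Unset Printing Implicit Defensive.
Import Order.TTheory GRing.Theory Num.Theory.
Import numFieldNormedType.Exports.
Local Open Scope classical_set_scope.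
Local Open Scope ring_scope.

Section Defs.
Variable R : realType.

(* d(x,A) = inf_{a in A} |x - a|, with d(x, emptyset) = +oo *)
Definition dist (B : normedModType R) (x : B) (A : set B) : \bar R :=
  ereal_inf [set (`|x - a|)%:E | a in A].

Definition lipschitz_like (A : topologicalType) (B : normedModType R)
  (dA : A -> A -> R) (T : A -> set B) (a0 : A) (b0 : B) (L : R) : Prop :=
  exists U V, nbhs a0 U /\ nbhs b0 V /\
    forall a u, U a -> U u -> forall b, T a b -> V b ->
      exists2 b', T u b' & `|b - b'| <= L * dA a u.

Definition lip (A : topologicalType) (B : normedModType R)
  (dA : A -> A -> R) (T : A -> set B) (a0 : A) (b0 : B) : \bar R :=
  ereal_inf [set L%:E | L in [set L | 0 < L /\ lipschitz_like dA T a0 b0 L]].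

Definition metric_regular (A B : normedModType R) (T : A -> set B)
  (a0 : A) (b0 : B) (L : R) : Prop :=
  exists U V, nbhs a0 U /\ nbhs b0 V /\
    forall a b, U a -> V b ->
      (dist a [set a' | T a' b] <= L%:E * dist b (T a))%E.

Definition reg (A B : normedModType R) (T : A -> set B) (a0 : A) (b0 : B)
  : \bar R :=
  ereal_inf [set L%:E | L in [set L | 0 < L /\ metric_regular T a0 b0 L]].

Definition inner_semicontinuous (A B : topologicalType) (T : A -> set B)
  (a0 : A) (b0 : B) : Prop :=
  forall D, open D -> D b0 -> \forall a \near a0, T a `&` D !=set0.

Definition locally_sum_stable (X P Y : normedModType R)
  (F : X -> P -> set Y) (G : X -> set Y) (xb : X) (pb : P) (yb zb : Y) : Prop :=
  forall eps, 0 < eps -> exists2 delta, 0 < delta &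
    forall x p, ball xb delta x -> ball pb delta p ->
      forall w, [set y + z | y in F x p & z in G x] w ->
        ball (yb + zb) delta w ->
        exists y z, [/\ F x p y, ball yb eps y, G x z, ball zb eps z
                        & w = y + z].

Definition lip_hat_x (X P Y : normedModType R) (F : X -> P -> set Y)
  (xb : X) (pb : P) (yb : Y) : \bar R :=
  ereal_inf [set L%:E | L in [set L | 0 < L /\
    exists U V W, [/\ nbhs xb U, nbhs pb V, nbhs yb W &
      forall x u p, U x -> U u -> V p -> forall y, F x p y -> W y ->
        exists2 y', F u p y' & `|y - y'| <= L * `|x - u|]]].

Definition lip_hat_p (X P Y : normedModType R) (F : X -> P -> set Y)
  (xb : X) (pb : P) (yb : Y) : \bar R :=
  ereal_inf [set L%:E | L in [set L | 0 < L /\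
    exists U V W, [/\ nbhs xb U, nbhs pb V, nbhs yb W &
      forall x p q, U x -> V p -> V q -> forall y, F x p y -> W y ->
        exists2 y', F x q y' & `|y - y'| <= L * `|p - q|]]].

Definition sum_dist (X P : normedModType R) (a b : X * P) : R :=
  `|a.1 - b.1| + `|a.2 - b.2|.

Definition solution_map (X P Y : normedModType R) (F : X -> P -> set Y)
  (G : X -> set Y) (p : P) : set X :=
  [set x | exists y z, [/\ F x p y, G x z & y + z = 0]].

End Defs.

(* For x in S(p) near xb, sum-stability gives y0 in F(x,p) near yb with -y0 in G(x),
   and the Lipschitz-like property of F in p gives y0' in F(x,q) with
   |y0 - y0'| <= kap |p - q|.  A Lyusternik-Graves iteration then closes the gap:
   metric regularity of G provides x1 with -y0' in G(x1) and |x - x1| <= mu |y0 - y0'|,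
   the Lipschitz-like property of F in x provides y1' in F(x1,q) with
   |y0' - y1'| <= lam |x - x1|, and so on.  As lam mu < 1 the iterates converge
   geometrically; by closedness of the graphs the limit lies in S(q), at distance at most
   mu kap |p - q| / (1 - lam mu) from x.  Letting lam, kap and mu decrease to the
   corresponding moduli yields the bound on lip S. *)

From HB Require Import structures.
From mathcomp Require Import all_boot all_order all_algebra.
From mathcomp Require Import all_classical all_reals all_analysis.
From mathcomp Require Import ring lra.
Import Order.TTheory GRing.Theory Num.Theory.
Import numFieldNormedType.Exports.
Local Open Scope classical_set_scope.
Local Open Scope ring_scope.

Lemma dependent_choice_nat {T : Type} {Inv : nat -> T -> Prop}
    {Rel : nat -> T -> T -> Prop} {s0 : T} :
  Inv 0%N s0 -> (forall n s, Inv n s -> exists2 s', Inv n.+1 s' & Rel n s s') ->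
  exists s : nat -> T, forall n, Inv n (s n) /\ Rel n (s n) (s n.+1).
Proof.
move=> Inv0 step.
have /choice[next Hnext] : forall ns : nat * T, exists s',
    Inv ns.1 ns.2 -> Inv ns.1.+1 s' /\ Rel ns.1 ns.2 s'.
  move=> [n s]; have [/step[s' ? ?]|nInv] := pselect (Inv n s).
    by exists s'.
  by exists s.
pose s := fix s n := if n is m.+1 then next (m, s m) else s0.
have Inv_s n : Inv n (s n) by elim: n => // n /(Hnext (n, _)) [].
by exists s => n; split => //; exact: (Hnext (n, s n) (Inv_s n)).2.
Qed.

Lemma cvgn_geometric_steps {R : realType} {V : completeNormedModType R}
    (u : V ^nat) (D q : R) : 0 <= q < 1 ->
  (forall n, `|u n - u n.+1| <= D * q ^+ n) -> cvgn u.
Proof.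
move=> /andP[q0 q1] step.
have D0 : 0 <= D by have := step 0%N; rewrite expr0 mulr1; apply: le_trans.
rewrite (funext (eq_sum_telescope u)); apply: is_cvgD; first exact: is_cvg_cst.
apply: normed_cvg; apply: (@series_le_cvg _ _ (geometric D q)).
- by move=> n /=.
- by move=> n; rewrite /= mulr_ge0 ?exprn_ge0.
- by move=> n; rewrite /= distrC.
- by apply: is_cvg_geometric_series; rewrite ger0_norm.
Qed.

Lemma geometric_partial_sumS {R : realDomainType} {t C a b : R} {n : nat} :
  t <= 1 -> (1 - t) * a <= C * (1 - t ^+ n) -> b <= C * t ^+ n ->
  (1 - t) * (a + b) <= C * (1 - t ^+ n.+1).
Proof.
move=> t1 ha hb; rewrite exprS mulrDr.
have : (1 - t) * b <= (1 - t) * (C * t ^+ n) by apply: ler_wpM2l; rewrite ?subr_ge0.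
nra.
Qed.

(* The strict [mu < mu'] is needed because [dist] is an infimum that need not be
   attained. *)
Lemma metric_regular_inverse_lipschitz_like {R : realType}
    {A B : normedModType R} {T : A -> set B} {a0 : A} {b0 : B} {mu mu' : R} :
  0 <= mu -> mu < mu' -> metric_regular T a0 b0 mu ->
  exists U V, [/\ nbhs a0 U, nbhs b0 V & forall a b c, U a -> V b -> T a c ->
    exists2 a', T a' b & `|a - a'| <= mu' * `|b - c|].
Proof.
move=> mu0 mumu' [U [V [U0 [V0 reg_UV]]]]; exists U, V; split => // a b c Ua Vb Tac.
have [->|bc] := eqVneq b c; first by exists a; rewrite // !subrr !normr0 mulr0.
have bc0 : 0 < `|b - c| by rewrite normr_gt0 subr_eq0.
have dist_bc : (dist b (T a) <= (`|b - c|)%:E)%E.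
  by apply: ereal_inf_lbound; exists c.
have : (dist a [set a' | T a' b] < (mu' * `|b - c|)%:E)%E.
  apply: (le_lt_trans (reg_UV _ _ Ua Vb)); rewrite EFinM.
  apply: (@le_lt_trans _ _ (mu%:E * (`|b - c|)%:E)%E).
    by apply: lee_wpmul2l => //; rewrite lee_fin.
  by rewrite -!EFinM lte_fin ltr_pM2r.
by case/ereal_inf_lt => _ [a' Ta' <-]; rewrite lte_fin => /ltW; exists a'.
Qed.

Section Iteration.
Context {R : realType} {X Y : completeNormedModType R}.
Context {F G : X -> set Y} {xb : X} {yb : Y} {rho lam mu : R}.
Hypotheses (lam_ge0 : 0 <= lam) (mu_ge0 : 0 <= mu) (contraction : lam * mu < 1).
Hypothesis F_lip : forall x u y, `|xb - x| < rho -> `|xb - u| < rho ->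
  `|yb - y| < rho -> F x y -> exists2 y', F u y' & `|y - y'| <= lam * `|x - u|.
Hypothesis G_inv_lip : forall x y y', `|xb - x| < rho -> `|yb - y'| < rho ->
  G x (- y) -> exists2 x', G x' (- y') & `|x - x'| <= mu * `|y - y'|.
Hypotheses (F_closed : closed [set xy : X * Y | F xy.1 xy.2])
  (G_closed : closed [set xy : X * Y | G xy.1 xy.2]).

Context {x0 : X} {y0 y0' : Y}.
Hypotheses (G_x0 : G x0 (- y0)) (F_x0 : F x0 y0').
Local Notation th := (lam * mu).
Local Notation K := `|y0 - y0'|.
Hypotheses (x0_near : (1 - th) * `|xb - x0| + mu * K < (1 - th) * rho)
  (y0_near : (1 - th) * `|yb - y0| + K < (1 - th) * rho).

Let th_ge0 : 0 <= th. Proof. exact: mulr_ge0. Qed.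
Let th_lt1 : 0 < 1 - th. Proof. by rewrite subr_gt0. Qed.
Let thn_ge0 n : 0 <= th ^+ n. Proof. exact: exprn_ge0. Qed.

Record state := State { sx : X; sy : Y; sy' : Y }.

Definition iter_inv n s := [/\ G (sx s) (- sy s), F (sx s) (sy' s),
  `|sy s - sy' s| <= K * th ^+ n,
  (1 - th) * `|x0 - sx s| <= mu * K * (1 - th ^+ n) &
  (1 - th) * `|y0 - sy s| <= K * (1 - th ^+ n)].

Definition iter_rel n s s' :=
  sy s' = sy' s /\ `|sx s - sx s'| <= mu * K * th ^+ n.

(* [lra]/[nra] ignore section hypotheses, hence the [move:] before them. *)
Let near_xb {x n} : (1 - th) * `|x0 - x| <= mu * K * (1 - th ^+ n) ->
  `|xb - x| < rho.
Proof.
move=> hx; rewrite -(ltr_pM2l th_lt1).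
have := ler_wpM2l (ltW th_lt1) (ler_distD x0 xb x).
have : 0 <= mu * K * th ^+ n by rewrite !mulr_ge0 ?thn_ge0.
move: x0_near hx; nra.
Qed.

Let near_yb {y n} : (1 - th) * `|y0 - y| <= K * (1 - th ^+ n) -> `|yb - y| < rho.
Proof.
move=> hy; rewrite -(ltr_pM2l th_lt1).
have := ler_wpM2l (ltW th_lt1) (ler_distD y0 yb y).
have : 0 <= K * th ^+ n by rewrite mulr_ge0 ?thn_ge0.
move: y0_near hy; nra.
Qed.

Lemma iter_step n s : iter_inv n s -> exists2 s', iter_inv n.+1 s' & iter_rel n s s'.
Proof.
case: s => x y y' [/= Gx Fx yy' x0x y0y].
have y0y' : (1 - th) * `|y0 - y'| <= K * (1 - th ^+ n.+1).
  apply: le_trans (geometric_partial_sumS (ltW contraction) y0y yy').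
  by apply: ler_wpM2l; [exact: ltW | exact: ler_distD].
have [x1 Gx1 xx1] := G_inv_lip _ _ _ (near_xb x0x) (near_yb y0y') Gx.
have {}xx1 : `|x - x1| <= mu * K * th ^+ n.
  by apply: le_trans xx1 _; rewrite -mulrA ler_wpM2l.
have x0x1 : (1 - th) * `|x0 - x1| <= mu * K * (1 - th ^+ n.+1).
  apply: le_trans (geometric_partial_sumS (ltW contraction) x0x xx1).
  by apply: ler_wpM2l; [exact: ltW | exact: ler_distD].
have [y1 Fy1 y'y1] := F_lip _ _ _ (near_xb x0x) (near_xb x0x1) (near_yb y0y') Fx.
exists (State x1 y' y1); split => //=.
apply: le_trans y'y1 _; rewrite exprS.
have -> : K * (th * th ^+ n) = lam * (mu * K * th ^+ n) by ring.
exact: ler_wpM2l.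
Qed.

Lemma iteration_limit : exists x y,
  [/\ F x y, G x (- y) & (1 - th) * `|x0 - x| <= mu * K].
Proof.
have inv0 : iter_inv 0 (State x0 y0 y0').
  by split; rewrite //= ?subrr ?normr0 ?expr0 ?mulr0 ?mulr1.
have [s Hs] := dependent_choice_nat inv0 iter_step.
pose xs n := sx (s n); pose ys n := sy (s n).
have ysS n : ys n.+1 = sy' (s n) by case: (Hs n) => _ [].
have cvg_xs : cvgn xs.
  apply: (@cvgn_geometric_steps _ _ _ (mu * K) th); first by rewrite th_ge0.
  by move=> n; case: (Hs n) => _ [].
have cvg_ys : cvgn ys.
  apply: (@cvgn_geometric_steps _ _ _ K th); first by rewrite th_ge0.
  by move=> n; rewrite ysS; case: (Hs n) => -[].
exists (limn xs), (limn ys); split.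
- suff : [set xy : X * Y | F xy.1 xy.2] (limn xs, limn ys) by [].
  apply: (@closed_cvg _ _ \oo _ (fun n => (xs n, ys n.+1)) _ F_closed).
    by apply: nearW => n; rewrite /= ysS; case: (Hs n) => -[].
  by apply: cvg_pair => //; rewrite (cvg_shiftS ys).
- suff : [set xy : X * Y | G xy.1 xy.2] (limn xs, - limn ys) by [].
  apply: (@closed_cvg _ _ \oo _ (fun n => (xs n, - ys n)) _ G_closed).
    by apply: nearW => n; case: (Hs n) => -[].
  by apply: cvg_pair => //; exact: cvgN.
- apply: (@cvgr_to_le _ \oo _ _ (fun n => (1 - th) * `|x0 - xs n|)).
    by apply: cvgMl_tmp; apply: cvg_norm; apply: cvgB => //; exact: cvg_cst.
  apply: nearW => n; have [[_ _ _ x0xn _] _] := Hs n.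
  by apply: le_trans x0xn _; rewrite ler_piMr ?mulr_ge0 // lerBlDr lerDl.
Qed.

End Iteration.

Section SolutionMapOnBall.
Context {R : realType} {X P Y : completeNormedModType R}.
Context {F : X -> P -> set Y} {G : X -> set Y} {xb : X} {pb : P} {yb : Y}
  {rho lam kap mu : R}.
Hypotheses (rho_gt0 : 0 < rho) (lam_ge0 : 0 <= lam) (kap_ge0 : 0 <= kap)
  (mu_ge0 : 0 <= mu) (contraction : lam * mu < 1).
Hypothesis F_lip_x : forall x u p y, `|xb - x| < rho -> `|xb - u| < rho ->
  `|pb - p| < rho -> `|yb - y| < rho -> F x p y ->
  exists2 y', F u p y' & `|y - y'| <= lam * `|x - u|.
Hypothesis F_lip_p : forall x p q y, `|xb - x| < rho -> `|pb - p| < rho ->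
  `|pb - q| < rho -> `|yb - y| < rho -> F x p y ->
  exists2 y', F x q y' & `|y - y'| <= kap * `|p - q|.
Hypothesis G_inv_lip : forall x y y', `|xb - x| < rho -> `|yb - y'| < rho ->
  G x (- y) -> exists2 x', G x' (- y') & `|x - x'| <= mu * `|y - y'|.
Hypothesis F_closed : forall p, `|pb - p| < rho ->
  closed [set xy : X * Y | F xy.1 p xy.2].
Hypothesis G_closed : closed [set xy : X * Y | G xy.1 xy.2].
Hypothesis sum_stable : locally_sum_stable F G xb pb yb (- yb).

Lemma solution_map_lipschitz_like_ball :
  lipschitz_like (fun p q : P => `|p - q|) (solution_map F G) pb xb
    (mu * kap / (1 - lam * mu)).
Proof.
have c_gt0 : 0 < 1 - lam * mu by rewrite subr_gt0.
have rho2_gt0 : 0 < rho / 2 by move: rho_gt0; lra.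
have rho2_lt : rho / 2 < rho by move: rho_gt0; lra.
have [d0 d0_gt0 stable_d0] := sum_stable _ rho2_gt0.
(* With |y0 - y0'| <= 2 kap d, the bound [D * d <= (1 - lam mu) rho] makes both proximity
   hypotheses of [iteration_limit] hold. *)
pose D := 4 * (mu * kap + kap + 1).
have D_gt0 : 0 < D by rewrite /D; move: mu_ge0 kap_ge0; nra.
near (0 : R)^'+ => d.
have d_gt0 : 0 < d by near: d; exact: nbhs_right_gt.
have d_d0 : d <= d0 by near: d; exact: nbhs_right_le.
have d_rho : d <= rho / 2 by near: d; exact: nbhs_right_le.
have D_d : D * d <= (1 - lam * mu) * rho.
  rewrite -ler_pdivlMl //; near: d; apply: nbhs_right_le.
  by rewrite !mulr_gt0 ?invr_gt0.
exists (ball pb d), (ball xb d); split; [exact: nbhsx_ballx | split].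
  exact: nbhsx_ballx.
move=> p q; rewrite -!ball_normE /= => pb_p pb_q x [y [z [Fy Gz yz0]]] xb_x.
have ball_d0 (V : normedModType R) (v w : V) : `|v - w| < d -> ball v d0 w.
  by rewrite -ball_normE /= => vw; lra.
have ball_0 : ball (yb - yb) d0 0 by rewrite subrr; exact: ballxx.
have [y0 [z0 [Fy0 yb_y0 Gz0 _ y0z0]]] := stable_d0 x p (ball_d0 _ _ _ xb_x)
  (ball_d0 _ _ _ pb_p) 0 (ex_intro2 _ _ y Fy (ex_intro2 _ _ z Gz yz0)) ball_0.
have z0E : z0 = - y0 by apply/eqP; rewrite -addr_eq0 addrC -y0z0.
rewrite z0E -ball_normE /= in Gz0 yb_y0.
have in_rho (V : normedModType R) (v w : V) : `|v - w| < d -> `|v - w| < rho.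
  by move=> vw; lra.
have [y0' Fy0' y0y0'] := F_lip_p _ _ _ _ (in_rho _ _ _ xb_x) (in_rho _ _ _ pb_p)
  (in_rho _ _ _ pb_q) (lt_trans yb_y0 rho2_lt)
 Fy0.
have K_le : `|y0 - y0'| <= kap * (2 * d).
  apply: le_trans y0y0' (ler_wpM2l kap_ge0 (ltW _)).
  by rewrite (le_lt_trans (ler_distD pb _ _)) // distrC; lra.
have mukd_ge0 : 0 <= mu * kap * d by rewrite !mulr_ge0 // ltW.
have x0_near : (1 - lam * mu) * `|xb - x| + mu * `|y0 - y0'| < (1 - lam * mu) * rho.
  have := ler_wpM2l mu_ge0 K_le.
  have : (1 - lam * mu) * `|xb - x| < (1 - lam * mu) * d by rewrite ltr_pM2l.
  have : 0 <= lam * mu * d by rewrite !mulr_ge0 // ltW.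
  have : 0 <= kap * d by rewrite !mulr_ge0 // ltW.
  move: D_d; rewrite /D; nra.
have y0_near : (1 - lam * mu) * `|yb - y0| + `|y0 - y0'| < (1 - lam * mu) * rho.
  have : (1 - lam * mu) * `|yb - y0| < (1 - lam * mu) * (rho / 2) by rewrite ltr_pM2l.
  move: D_d; rewrite /D; nra.
have [x1 [y1 [Fx1 Gx1 xx1]]] := iteration_limit (F := fun x => F x q)
  lam_ge0 mu_ge0 contraction
  (fun x u y hx hu hy => F_lip_x x u q y hx hu (in_rho _ _ _ pb_q) hy)
  G_inv_lip (F_closed q (in_rho _ _ _ pb_q)) G_closed Gz0 Fy0' x0_near y0_near.
exists x1; first by exists y1, (- y1); split; rewrite ?subrr.
rewrite mulrAC ler_pdivlMr // mulrC (le_trans xx1) // -mulrA.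
by rewrite ler_wpM2l.
Unshelve. all: by end_near. Qed.

End SolutionMapOnBall.

Lemma nbhs_norm_ball {R : realFieldType} {V : normedModType R} {x : V}
    {U : set V} : nbhs x U ->
  \forall r \near (0 : R)^'+, forall y, `|x - y| < r -> U y.
Proof.
move=> /nbhs_ballP[e /= e_gt0 xeU]; near=> r => y xy; apply: xeU.
by rewrite -ball_normE /= (lt_le_trans xy) //; near: r; exact: nbhs_right_le.
Unshelve. all: by end_near. Qed.

Section ErealInfPos.
Context {R : realType} {Q : R -> Prop}.
Local Notation inf_pos := (ereal_inf [set L%:E | L in [set L | (0 < L)%R /\ Q L]]).

Lemma ereal_inf_pos_ge0 : (0 <= inf_pos)%E.
Proof. by apply: le_ereal_inf_tmp => _ [L [L_gt0 _] <-]; rewrite lee_fin ltW. Qed.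

Lemma ereal_inf_pos_fin {L0} : 0 < L0 -> Q L0 -> exists2 a, inf_pos = a%:E & 0 <= a.
Proof.
move=> L0_gt0 QL0; have : (inf_pos <= L0%:E)%E by apply: ereal_inf_lbound; exists L0.
by move: ereal_inf_pos_ge0; case: inf_pos => // a; rewrite lee_fin; exists a.
Qed.

Lemma ereal_inf_pos_approx {a e} : inf_pos = a%:E -> 0 < e ->
  exists2 L, 0 < L /\ Q L & L < a + e.
Proof.
move=> inf_a e_gt0; have : (inf_pos < (a + e)%:E)%E by rewrite inf_a lte_fin ltrDl.
by case/ereal_inf_lt => _ [L QL <-]; rewrite lte_fin; exists L.
Qed.

End ErealInfPos.

Lemma lipschitz_like_le {R : realType} {A : topologicalType} {B : normedModType R}
    {dA : A -> A -> R} {T : A -> set B} {a0 : A} {b0 : B} {L L' : R} :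
  (forall a u, 0 <= dA a u) -> L <= L' ->
  lipschitz_like dA T a0 b0 L -> lipschitz_like dA T a0 b0 L'.
Proof.
move=> dA_ge0 LL' [U [V [U0 [V0 lipUV]]]]; exists U, V; split => //; split => //.
move=> a u Ua Uu b Tab Vb; have [b' Tb' bb'] := lipUV a u Ua Uu b Tab Vb.
by exists b' => //; apply: le_trans bb' _; rewrite ler_wpM2r.
Qed.

Lemma perturb_constants {R : realType} {a b r t : R} : a * r < 1 ->
  r * b / (1 - a * r) < t -> exists2 e, 0 < e &
  (a + e) * (r + e) < 1 /\ (r + e) * (b + e) / (1 - (a + e) * (r + e)) < t.
Proof.
move=> ar1 bt.
have cvg_addM c d : (c + e) * (d + e) @[e --> (0 : R)] --> c * d.
  have -> : c * d = (c + 0) * (d + 0) by rewrite !addr0.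
  by apply: cvgM; apply: cvgD => //; exact: cvg_cst.
have cvg_bound : (r + e) * (b + e) / (1 - (a + e) * (r + e)) @[e --> (0 : R)]
    --> r * b / (1 - a * r).
  apply: cvgM => //; apply: cvgV; first by rewrite subr_eq0 gt_eqF.
  by apply: cvgB => //; exact: cvg_cst.
near (0 : R)^'+ => e; exists e; last split.
- by near: e; exact: nbhs_right_gt.
- by near: e; apply: (cvgr_lt _ (cvg_at_right_filter (cvg_addM a r))) ar1.
- by near: e; apply: (cvgr_lt _ (cvg_at_right_filter cvg_bound)) bt.
Unshelve. all: by end_near. Qed.

Section SolutionMap.
Context {R : realType} {X P Y : completeNormedModType R}.
Variables (F : X -> P -> set Y) (G : X -> set Y) (xb : X) (pb : P) (yb : Y).

(* [lip_hat_x F xb pb yb] and [lip_hat_p F xb pb yb] are the infima of the positive [L]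
   satisfying these two properties. *)
Definition lipschitz_like_x (L : R) := exists U V W,
  [/\ nbhs xb U, nbhs pb V, nbhs yb W &
    forall x u p, U x -> U u -> V p -> forall y, F x p y -> W y ->
      exists2 y', F u p y' & `|y - y'| <= L * `|x - u|].

Definition lipschitz_like_p (L : R) := exists U V W,
  [/\ nbhs xb U, nbhs pb V, nbhs yb W &
    forall x p q, U x -> V p -> V q -> forall y, F x p y -> W y ->
      exists2 y', F x q y' & `|y - y'| <= L * `|p - q|].

Lemma lipschitz_like_joint_x {L} :
  lipschitz_like (@sum_dist R X P) (fun xp : X * P => F xp.1 xp.2) (xb, pb) yb L ->
  lipschitz_like_x L.
Proof.
move=> [U [W [[[A B] /= [A0 B0] ABU] [W0 lipUW]]]]; exists A, B, W; split => //.
move=> x u p Ax Au Bp y Fy Wy.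
have [y' Fy' yy'] := lipUW (x, p) (u, p) (ABU (x, p) (conj Ax Bp))
  (ABU (u, p) (conj Au Bp)) y Fy Wy.
by exists y' => //; rewrite /sum_dist /= subrr normr0 addr0 in yy'.
Qed.

Lemma lipschitz_like_joint_p {L} :
  lipschitz_like (@sum_dist R X P) (fun xp : X * P => F xp.1 xp.2) (xb, pb) yb L ->
  lipschitz_like_p L.
Proof.
move=> [U [W [[[A B] /= [A0 B0] ABU] [W0 lipUW]]]]; exists A, B, W; split => //.
move=> x p q Ax Bp Bq y Fy Wy.
have [y' Fy' yy'] := lipUW (x, p) (x, q) (ABU (x, p) (conj Ax Bp))
  (ABU (x, q) (conj Ax Bq)) y Fy Wy.
by exists y' => //; rewrite /sum_dist /= subrr normr0 add0r in yy'.
Qed.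

Lemma solution_map_lipschitz_like {lam kap mu mu' : R} :
  0 <= lam -> 0 <= kap -> 0 <= mu -> mu < mu' -> lam * mu' < 1 ->
  lipschitz_like_x lam -> lipschitz_like_p kap ->
  metric_regular G xb (- yb) mu ->
  locally_sum_stable F G xb pb yb (- yb) ->
  (\forall p \near pb, closed [set xy : X * Y | F xy.1 p xy.2]) ->
  closed [set xy : X * Y | G xy.1 xy.2] ->
  lipschitz_like (fun p q : P => `|p - q|) (solution_map F G) pb xb
    (mu' * kap / (1 - lam * mu')).
Proof.
move=> lam_ge0 kap_ge0 mu_ge0 mu_lt contraction
  [U1 [V1 [W1 [U1x V1p W1y F_lip_x]]]] [U2 [V2 [W2 [U2x V2p W2y F_lip_p]]]]
  /(metric_regular_inverse_lipschitz_like mu_ge0 mu_lt)[U3 [V3 [U3x V3y G_inv]]]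
  sum_stable F_closed G_closed.
have mu'_ge0 : 0 <= mu' by apply: le_trans (ltW mu_lt).
near (0 : R)^'+ => rho.
have Ux : forall x, `|xb - x| < rho -> (U1 `&` (U2 `&` U3)) x.
  by near: rho; exact/nbhs_norm_ball/(filterI U1x (filterI U2x U3x)).
have Vp : forall p, `|pb - p| < rho ->
    (V1 `&` (V2 `&` (fun p => closed [set xy : X * Y | F xy.1 p xy.2]))) p.
  by near: rho; exact/nbhs_norm_ball/(filterI V1p (filterI V2p F_closed)).
have Wy : forall y, `|yb - y| < rho -> (W1 `&` W2) y.
  by near: rho; exact/nbhs_norm_ball/(filterI W1y W2y).
have V3y' : forall y, `|- yb - y| < rho -> V3 y by near: rho; exact/nbhs_norm_ball.
have rho_gt0 : 0 < rho by near: rho; exact: nbhs_right_gt.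
apply: (solution_map_lipschitz_like_ball (rho := rho)) => //.
- move=> x u p y /Ux[U1x' _] /Ux[U1u _] /Vp[V1p' _] /Wy[W1y' _] Fy.
  exact: F_lip_x.
- move=> x p q y /Ux[_ [U2x' _]] /Vp[_ [V2p' _]] /Vp[_ [V2q _]] /Wy[_ W2y'] Fy.
  exact: F_lip_p.
- move=> x y y' /Ux[_ [_ U3x']] yb_y' Gxy.
  have V3y'' : V3 (- y') by apply: V3y'; rewrite opprK addrC distrC.
  have [x' Gx' xx'] := G_inv _ _ _ U3x' V3y'' Gxy.
  by exists x' => //; rewrite opprK (addrC (- y')) in xx'.
- by move=> p /Vp[_ []].
Unshelve. all: by end_near. Qed.

Lemma solution_map_lipschitz_like_gt {r a b t : R} :
  reg G xb (- yb) = r%:E -> lip_hat_x F xb pb yb = a%:E ->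
  lip_hat_p F xb pb yb = b%:E -> a * r < 1 ->
  locally_sum_stable F G xb pb yb (- yb) ->
  (\forall p \near pb, closed [set xy : X * Y | F xy.1 p xy.2]) ->
  closed [set xy : X * Y | G xy.1 xy.2] ->
  r * b / (1 - a * r) < t ->
  lipschitz_like (fun p q : P => `|p - q|) (solution_map F G) pb xb t.
Proof.
move=> Hr Ha Hb ar1 stable F_closed G_closed bt.
have [e e_gt0 [ar_e bound_e]] := perturb_constants ar1 bt.
have [lam [lam_gt0 F_lip_x] lam_lt] := ereal_inf_pos_approx Ha e_gt0.
have [kap [kap_gt0 F_lip_p] kap_lt] := ereal_inf_pos_approx Hb e_gt0.
have [mu [mu_gt0 G_reg] mu_lt] := ereal_inf_pos_approx Hr e_gt0.
have r_ge0 : 0 <= r by rewrite -lee_fin -Hr; exact: ereal_inf_pos_ge0.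
have re_ge0 : 0 <= r + e by rewrite addr_ge0 // ltW.

have lam_mu : lam * (r + e) <= (a + e) * (r + e) by apply: ler_wpM2r => //; exact: ltW.
have contraction : lam * (r + e) < 1 by apply: le_lt_trans ar_e.
have := solution_map_lipschitz_like (ltW lam_gt0) (ltW kap_gt0) (ltW mu_gt0)
  mu_lt contraction F_lip_x F_lip_p G_reg stable F_closed G_closed.
apply: lipschitz_like_le => //; apply: le_trans (ltW bound_e); apply: ler_pM.
- by rewrite mulr_ge0 // ltW.
- by rewrite invr_ge0 subr_ge0 ltW.
- by rewrite ler_wpM2l // ltW.
- by rewrite lef_pV2 ?posrE ?subr_gt0 // lerD2l lerN2.

Qed.

End SolutionMap.

Theorem theorem4p13 (R : realType) (X P Y : completeNormedModType R)
  (F : X -> P -> set Y) (G : X -> set Y) (xb : X) (pb : P) (yb : Y) :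
  F xb pb yb -> G xb (- yb) ->
  locally_sum_stable F G xb pb yb (- yb) ->
  (\forall p \near pb, closed [set xy : X * Y | F xy.1 p xy.2]) ->
  closed [set xy : X * Y | G xy.1 xy.2] ->
  (exists2 L, 0 < L &
     lipschitz_like (@sum_dist R X P) (fun xp : X * P => F xp.1 xp.2)
       (xb, pb) yb L) ->
  (exists2 L, 0 < L & metric_regular G xb (- yb) L) ->
  inner_semicontinuous G xb (- yb) ->
  (lip_hat_x F xb pb yb * reg G xb (- yb)%R < 1)%E ->
  (exists2 L, 0 < L &
     lipschitz_like (fun p q : P => `|p - q|) (solution_map F G) pb xb L) /\
  (forall r a b : R,
     reg G xb (- yb) = r%:E -> lip_hat_x F xb pb yb = a%:E ->
     lip_hat_p F xb pb yb = b%:E ->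
     (lip (fun p q : P => `|p - q|%R) (solution_map F G) pb xb
        <= ((r * b) / (1 - a * r))%R%:E)%E).
Proof.
(* Sum-stability already supplies the points near (yb, -yb). *)
move=> _ _ stable F_closed G_closed [L L_gt0 F_lip] [Lg Lg_gt0 G_reg] _ lt1.
have [a Ha a_ge0] : exists2 a, lip_hat_x F xb pb yb = a%:E & 0 <= a
  := ereal_inf_pos_fin L_gt0 (lipschitz_like_joint_x F xb pb yb F_lip).
have [b Hb b_ge0] : exists2 b, lip_hat_p F xb pb yb = b%:E & 0 <= b
  := ereal_inf_pos_fin L_gt0 (lipschitz_like_joint_p F xb pb yb F_lip).
have [r Hr r_ge0] : exists2 r, reg G xb (- yb) = r%:E & 0 <= r
  := ereal_inf_pos_fin Lg_gt0 G_reg.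
have ar1 : a * r < 1 by move: lt1; rewrite Ha Hr -EFinM lte_fin.
have lipS t : r * b / (1 - a * r) < t ->
    lipschitz_like (fun p q : P => `|p - q|) (solution_map F G) pb xb t.
  exact: solution_map_lipschitz_like_gt Hr Ha Hb ar1 stable F_closed G_closed.
have bound_ge0 : 0 <= r * b / (1 - a * r) by rewrite divr_ge0 ?mulr_ge0 // subr_ge0 ltW.
split; first by exists (r * b / (1 - a * r) + 1); [lra | apply: lipS; lra].
move=> r' a' b'; rewrite Hr Ha Hb => -[<-] [<-] [<-].
apply/lee_addgt0Pr => e e_gt0; rewrite -EFinD; apply: ereal_inf_lbound.
by exists (r * b / (1 - a * r) + e); [split; [lra | apply: lipS; lra] | ].
Qed.
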